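(* Let $D=(Q,\Sigma,\delta,q_0,A)$ and $D'=(Q',\Sigma,\delta',q_0',A')$ be minimized DFAs over the same alphabet with $L(D)\sim L(D')$. Then $D\cong_I D'$.
   Context: All DFAs are complete (total transition function $\delta$, extended to words in the usual way) and all their states are reachable from the start state. A DFA is \emph{minimized} if it is the minimal DFA for its language, i.e. all states are reachable and no two distinct states are equivalent (no two distinct states $p\neq q$ satisfy $L(p)=L(q)$, where $L(q)$ is the language accepted when $q$ is used as start state). Two languages $L,L'$ are \emph{finitely different}, written $L\sim L'$, if the symmetric difference $L\triangle L'$ is finite. The \emph{infinite part} $I(D)$ of a DFA $D$ is the set of states $q\in Q$ such that $\{w\in\Sigma^*:\delta(q_0,w)=q\}$ is infinite (equivalently: $q$ lies on a cycle, i.e. $\delta(q,w)=q$ for some nonempty $w$, or is reachable from a state on a cycle); the \emph{finite part} is $F(D)=Q\setminus I(D)$. We write $D\cong_I D'$ (isomorphic infinite parts) if there is a bijection $f:I(D)\to I(D')$ such that (1) for all $q\in I(D)$, $q\in A\iff f(q)\in A'$, and (2) for all $q\in I(D)$ and $c\in\Sigma$, $f(\delta(q,c))=\delta'(f(q),c)$. *)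

From mathcomp Require Import all_boot.
Set Implicit Arguments. Unset Strict Implicit. Unset Printing Implicit Defensive.

Record DFA (Sigma : finType) := MkDFA {
  state : finType;
  delta : state -> Sigma -> state;
  start : state;
  accept : pred state
}.
Arguments delta {Sigma} {d} _ _ : rename.
Arguments start {Sigma} d : rename.
Arguments accept {Sigma} d _ : rename.

Section DFADefs.
Variable Sigma : finType.
Variable D : DFA Sigma.

Definition delta_star (q : state D) (w : seq Sigma) : state D :=
  foldl (@delta Sigma D) q w.

Definition accepts_from (q : state D) (w : seq Sigma) : bool :=
  accept D (delta_star q w).

Definition lang (w : seq Sigma) : bool := accepts_from (start D) w.

Definition reachable_all : Prop :=
  forall q : state D, exists w, delta_star (start D) w = q.

Definition minimized : Prop :=
  reachable_all /\
  forall p q : state D, (forall w, accepts_from p w = accepts_from q w) -> p = q.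

Definition in_infinite_part (q : state D) : Prop :=
  ~ exists s : seq (seq Sigma), forall w, delta_star (start D) w = q -> w \in s.
End DFADefs.

Definition finitely_different (Sigma : finType) (L L' : seq Sigma -> bool) : Prop :=
  exists s : seq (seq Sigma), forall w, L w != L' w -> w \in s.

(* D ≅_I D': a bijection f : I(D) -> I(D') preserving acceptance and
   transitions (f represented as a total function, constrained on I(D)). *)
Definition iso_infinite_parts (Sigma : finType) (D D' : DFA Sigma) : Prop :=
  exists f : state D -> state D',
    [/\ (forall q, in_infinite_part q -> in_infinite_part (f q)),
        (forall p q, in_infinite_part p -> in_infinite_part q -> f p = f q -> p = q),
        (forall q', in_infinite_part q' -> exists2 q, in_infinite_part q & f q = q'),
        (forall q, in_infinite_part q -> (accept D q = accept D' (f q))) &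
        (forall q c, in_infinite_part q -> f (delta q c) = delta (f q) c)].

From Stdlib Require Import ClassicalEpsilon Classical.
From mathcomp Require Import all_boot.
Set Implicit Arguments. Unset Strict Implicit. Unset Printing Implicit Defensive.

(* Beyond the length M of the longest word in L(D) △ L(D'), every word w
   satisfies u ∈ L(δ(q0,w)) ⟺ u ∈ L(δ'(q0',w)), so by minimality of D' the
   state δ'(q0',w) depends only on δ(q0,w).  A state lies in the infinite
   part iff it is reached by arbitrarily long words, so f(δ(q0,w)) :=
   δ'(q0',w) for long w is well defined on I(D); it commutes with transitions
   and acceptance, and the symmetric map is its inverse on I(D'). *)

Lemma delta_star_cat (Sigma : finType) (D : DFA Sigma) (q : state D) w u :
  delta_star q (w ++ u) = delta_star (delta_star q w) u.
Proof. by rewrite /delta_star foldl_cat. Qed.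

Lemma delta_star_rcons (Sigma : finType) (D : DFA Sigma) (q : state D) w c :
  delta_star q (rcons w c) = delta (delta_star q w) c.
Proof. by rewrite /delta_star foldl_rcons. Qed.

Fixpoint words_upto (Sigma : finType) (n : nat) : seq (seq Sigma) :=
  if n is n'.+1 then [::] :: [seq c :: w | c <- enum Sigma, w <- words_upto Sigma n']
  else [:: [::]].

Lemma mem_words_upto (Sigma : finType) n (w : seq Sigma) :
  size w <= n -> w \in words_upto Sigma n.
Proof.
elim: w n => [|c w IH] [|n] //=; try by rewrite in_cons eqxx.
move=> le_wn; rewrite in_cons; apply/orP; right.
by apply/allpairsP; exists (c, w); rewrite mem_enum IH.
Qed.

Lemma finitely_different_long (Sigma : finType) (L L' : seq Sigma -> bool) :
  finitely_different L L' -> exists M, forall w, M < size w -> L w = L' w.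
Proof.
move=> [s hs]; exists (\max_(w <- s) size w) => w long_w.
apply/eqP; apply: contraTT long_w => /hs w_s.
by rewrite -leqNgt (leq_bigmax_seq _ w_s).
Qed.

Lemma in_infinite_partP (Sigma : finType) (D : DFA Sigma) (q : state D) :
  in_infinite_part q <-> forall N, exists2 w, N < size w & delta_star (start D) w = q.
Proof.
split=> [infq N | long_q [s hs]].
- apply: NNPP => no_long; apply: infq; exists (words_upto Sigma N) => w wq.
  apply: mem_words_upto; rewrite leqNgt; apply/negP => long_w.
  by apply: no_long; exists w.
- have [w long_w /hs w_s] := long_q (\max_(u <- s) size u).
  by move: long_w; rewrite ltnNge (leq_bigmax_seq _ w_s).
Qed.

Section LongWords.
Variables (Sigma : finType) (D D' : DFA Sigma) (M : nat).
Hypothesis lang_long : forall w, M < size w -> lang D w = lang D' w.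

Lemma accepts_from_long w u : M < size w ->
  accepts_from (delta_star (start D) w) u = accepts_from (delta_star (start D') w) u.
Proof.
move=> long_w; have := lang_long (w := w ++ u).
rewrite /lang /accepts_from !delta_star_cat size_cat; apply.
exact: leq_trans long_w (leq_addr _ _).
Qed.

Lemma delta_star_long_congr w1 w2 : minimized D' -> M < size w1 -> M < size w2 ->
  delta_star (start D) w1 = delta_star (start D) w2 ->
  delta_star (start D') w1 = delta_star (start D') w2.
Proof.
move=> [_ minD'] long1 long2 e; apply: minD' => u.
by rewrite -(accepts_from_long _ long1) -(accepts_from_long _ long2) e.
Qed.
End LongWords.

Section InfinitePartMap.
Variables (Sigma : finType) (D D' : DFA Sigma) (M : nat).
Hypothesis lang_long : forall w, M < size w -> lang D w = lang D' w.
Hypotheses (minD : minimized D) (minD' : minimized D').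

Let lang_long' w (long_w : M < size w) : lang D' w = lang D w :=
  esym (lang_long long_w).

Lemma delta_star_long_eq w1 w2 : M < size w1 -> M < size w2 ->
  (delta_star (start D) w1 = delta_star (start D) w2) <->
  (delta_star (start D') w1 = delta_star (start D') w2).
Proof.
move=> long1 long2; split.
- exact: (delta_star_long_congr lang_long minD' long1 long2).
- exact: (delta_star_long_congr lang_long' minD long1 long2).
Qed.

(* Off the infinite part no long word reaches q, so epsilon returns an
   arbitrary word; the value there is irrelevant. *)
Definition infinite_part_map (q : state D) : state D' :=
  delta_star (start D')
    (epsilon (inhabits [::]) (fun w => M < size w /\ delta_star (start D) w = q)).

Local Notation f := infinite_part_map.

Lemma infinite_part_mapE w : M < size w ->
  f (delta_star (start D) w) = delta_star (start D') w.
Proof.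
move=> long_w; rewrite /f.
have [long_e e] := epsilon_spec (inhabits [::])
  (fun u => M < size u /\ delta_star (start D) u = delta_star (start D) w)
  (ex_intro _ w (conj long_w erefl)).
exact: (delta_star_long_congr lang_long minD' long_e long_w e).
Qed.

Lemma long_word_of_infinite (q : state D) : in_infinite_part q ->
  exists2 w, M < size w & delta_star (start D) w = q.
Proof. by move/in_infinite_partP; apply. Qed.

Lemma infinite_part_map_infinite q : in_infinite_part q -> in_infinite_part (f q).
Proof.
move/in_infinite_partP=> long_q; apply/in_infinite_partP => N.
have [w] := long_q (maxn N M); rewrite gtn_max => /andP[gtN gtM] <-.
by exists w; rewrite ?infinite_part_mapE.
Qed.

Lemma infinite_part_map_inj p q : in_infinite_part p -> in_infinite_part q ->
  f p = f q -> p = q.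
Proof.
move=> /long_word_of_infinite[wp long_p <-] /long_word_of_infinite[wq long_q <-].
by rewrite !infinite_part_mapE // -delta_star_long_eq.
Qed.

Lemma infinite_part_map_surj q' : in_infinite_part q' ->
  exists2 q, in_infinite_part q & f q = q'.
Proof.
move/in_infinite_partP=> long_q'; have [w long_w wq'] := long_q' M.
exists (delta_star (start D) w); last by rewrite infinite_part_mapE.
apply/in_infinite_partP => N; have [u] := long_q' (maxn N M).
rewrite gtn_max => /andP[gtN gtM] uq'; exists u => //.
by apply/delta_star_long_eq; rewrite // uq'.
Qed.

Lemma infinite_part_map_accept q : in_infinite_part q -> accept D q = accept D' (f q).
Proof.
move=> /long_word_of_infinite[w long_w <-]; rewrite infinite_part_mapE //.
exact: (accepts_from_long lang_long [::] long_w).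
Qed.

Lemma infinite_part_map_delta q c : in_infinite_part q -> f (delta q c) = delta (f q) c.
Proof.
move=> /long_word_of_infinite[w long_w <-].
rewrite -delta_star_rcons !infinite_part_mapE ?delta_star_rcons //.
by rewrite size_rcons ltnS ltnW.
Qed.
End InfinitePartMap.

Theorem mainTheorem1 (Sigma : finType) (D D' : DFA Sigma) :
  minimized D -> minimized D' ->
  finitely_different (lang D) (lang D') ->
  iso_infinite_parts D D'.
Proof.
move=> minD minD' /finitely_different_long[M lang_long].
exists (@infinite_part_map _ D D' M); split.
- exact: (infinite_part_map_infinite lang_long minD').
- exact: (infinite_part_map_inj lang_long minD minD').
- exact: (infinite_part_map_surj lang_long minD minD').
- exact: (infinite_part_map_accept lang_long minD').
- exact: (infinite_part_map_delta lang_long minD').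
Qed.
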